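(* Let $\mathcal{H}$ be a class of functions $\mathcal{X}\to\{-1,+1\}$ with VC dimension $d\ge1$. For $h_1,h_2\in\mathcal{H}$ define $f[h_1,h_2]:\mathcal{X}\times\{-1,+1\}\to\{0,1\}$ by $f[h_1,h_2](x,y)=\mathbb{I}[h_1(x)=y\text{ or }h_2(x)=1]$. Then the VC dimension of $\mathcal{F}=\{f[h_1,h_2]:h_1,h_2\in\mathcal{H}\}$ is at most $10d$. *)

(* Labels {-1,+1} and {0,1} are both encoded by bool:
   +1 / 1 = true, -1 / 0 = false. *)
From Stdlib Require Import List Bool Arith.
Import ListNotations.

Definition shatters {T : Type} (H : (T -> bool) -> Prop) (S : list T) : Prop :=
  forall lab : T -> bool, exists h, H h /\ forall x, In x S -> h x = lab x.

Definition VCdim_eq {T : Type} (H : (T -> bool) -> Prop) (d : nat) : Prop :=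
  (exists S, NoDup S /\ length S = d /\ shatters H S) /\
  (forall S, NoDup S -> shatters H S -> length S <= d).

Definition VCdim_le {T : Type} (H : (T -> bool) -> Prop) (d : nat) : Prop :=
  forall S, NoDup S -> shatters H S -> length S <= d.

Definition fpair {X : Type} (h1 h2 : X -> bool) (p : X * bool) : bool :=
  Bool.eqb (h1 (fst p)) (snd p) || h2 (fst p).

Definition Fclass {X : Type} (H : (X -> bool) -> Prop) : ((X * bool) -> bool) -> Prop :=
  fun f => exists h1 h2, H h1 /\ H h2 /\ f = fpair h1 h2.

(* The all-zero labelling forces y = ~ h1(x) on a shattered sample, so its m
   points have distinct x-coordinates P.  The pattern of f[h1,h2] on the sample
   is determined by the traces of h1 and h2 on P, so 2^m is at most the square
   of the number of traces of H on P, which by the Sauer-Shelah lemma is at most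
   Phi_d(m) <= 10^d (11/10)^m.  Hence 200^m <= 100^d 121^m, which fails as soon
   as m > 10 d because 100 * 121^10 < 200^10. *)

From Stdlib Require Import List Bool Arith ZArith Lia ClassicalEpsilon.
Import ListNotations.

Fixpoint bool_vectors (n : nat) : list (list bool) :=
  match n with
  | 0 => [[]]
  | S n' => map (cons true) (bool_vectors n') ++ map (cons false) (bool_vectors n')
  end.

Lemma length_bool_vectors n : length (bool_vectors n) = 2 ^ n.
Proof. induction n as [|n IH]; simpl; auto. rewrite length_app, !length_map; lia. Qed.

Lemma In_bool_vectors n v : In v (bool_vectors n) <-> length v = n.
Proof.
  revert v; induction n as [|n IH]; intros v; simpl.
  - split; [intros [<-|[]]; reflexivity | destruct v; [auto|discriminate]].
  - rewrite in_app_iff, !in_map_iff. split.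
    + intros [[w [<- Hw]]|[w [<- Hw]]]; simpl; f_equal; apply IH, Hw.
    + destruct v as [|[] w]; simpl; intros Hv; [discriminate| |];
        [left|right]; exists w; split; auto; apply IH; lia.
Qed.

Lemma NoDup_bool_vectors n : NoDup (bool_vectors n).
Proof.
  induction n as [|n IH]; simpl; [repeat constructor; auto|].
  apply NoDup_app.
  1,2: apply NoDup_map_NoDup_ForallPairs; auto; intros u w _ _ E; injection E; auto.
  - intros v Hv Hv'. apply in_map_iff in Hv as [u [<- _]].
    apply in_map_iff in Hv' as [w [E _]]. discriminate.
Qed.

Lemma length_filter_orb_andb {A} (p q : A -> bool) (l : list A) :
  length (filter p l) + length (filter q l) =
  length (filter (fun a => p a || q a) l) + length (filter (fun a => p a && q a) l).
Proof. induction l as [|a l IH]; simpl; auto. destruct (p a), (q a); simpl; lia. Qed.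

Lemma labelling_exists {A} (S : list A) :
  NoDup S -> forall v, length v = length S -> exists lab : A -> bool, map lab S = v.
Proof.
  induction S as [|p S IH]; intros HS [|b v] Hv; try discriminate.
  - exists (fun _ => true); auto.
  - apply NoDup_cons_iff in HS as [Hp HS]. destruct (IH HS v) as [lab Hl]; [simpl in Hv; lia|].
    exists (fun q => if excluded_middle_informative (q = p) then b else lab q); simpl.
    destruct (excluded_middle_informative (p = p)) as [_|]; [|congruence]. f_equal.
    rewrite <- Hl. apply map_ext_in. intros q Hq.
    destruct (excluded_middle_informative (q = p)); [subst; contradiction | auto].
Qed.

Section Traces.
Context {X : Type}.
Implicit Types (C : (X -> bool) -> Prop) (P T : list X).

Definition is_trace C P (v : list bool) : bool :=
  if excluded_middle_informative (exists h, C h /\ map h P = v) then true else false.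

Lemma is_traceP C P v : is_trace C P v = true <-> exists h, C h /\ map h P = v.
Proof.
  unfold is_trace; destruct (excluded_middle_informative _); split; auto; discriminate.
Qed.

Definition traces C P : list (list bool) := filter (is_trace C P) (bool_vectors (length P)).

Lemma In_traces C P v : In v (traces C P) <-> exists h, C h /\ map h P = v.
Proof.
  unfold traces; rewrite filter_In, In_bool_vectors, is_traceP.
  split; [tauto|]. intros [h [Ch <-]]. split; [apply length_map | eauto].
Qed.

Definition VCdim_le_on C P k : Prop :=
  forall T, NoDup T -> incl T P -> shatters C T -> length T <= k.

(* Its traces on P are exactly those that C realizes with both values at x. *)
Definition flippable_at C x P (h : X -> bool) : Prop :=
  C h /\ exists h', C h' /\ map h' P = map h P /\ h' x <> h x.

Lemma length_traces_cons C x P :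
  length (traces C (x :: P)) = length (traces C P) + length (traces (flippable_at C x P) P).
Proof.
  unfold traces; simpl length; simpl bool_vectors.
  rewrite filter_app, length_app, !filter_map_swap, !length_map, length_filter_orb_andb.
  f_equal; apply f_equal, filter_ext; intros v; apply eq_true_iff_eq;
    rewrite ?orb_true_iff, ?andb_true_iff, !is_traceP; simpl.
  - split.
    + intros [[h [Ch E]]|[h [Ch E]]]; injection E; eauto.
    + intros [h [Ch <-]]. destruct (h x) eqn:Hx; [left|right]; exists h; rewrite Hx; auto.
  - split.
    + intros [[h [Ch E]] [h' [Ch' E']]]; injection E as Hx <-; injection E' as Hx' E'.
      exists h; repeat split; auto; exists h'; repeat split; auto; congruence.
    + intros [h [[Ch [h' [Ch' [E Hx]]]] <-]].
      destruct (h x) eqn:Hhx; destruct (h' x) eqn:Hh'x; try congruence;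
        split; [exists h|exists h'| exists h'|exists h]; rewrite ?Hhx, ?Hh'x, ?E; auto.
Qed.

Lemma flippable_at_shatters C x P T :
  incl T P -> shatters (flippable_at C x P) T -> shatters C (x :: T).
Proof.
  intros HTP Hsh lab. destruct (Hsh lab) as [h [[Ch [h' [Ch' [E Hx]]]] Hh]].
  destruct (bool_dec (h x) (lab x)) as [Hlx|Hlx].
  - exists h; split; auto. intros y [<-|Hy]; auto.
  - exists h'; split; auto. intros y [<-|Hy].
    + destruct (h' x), (h x), (lab x); congruence.
    + rewrite <- Hh by exact Hy. apply (ext_in_map E), HTP, Hy.
Qed.

(* Phi k n = sum_{i <= k} binomial n i. *)
Fixpoint Phi (k n : nat) : nat :=
  match n, k with
  | 0, _ | _, 0 => 1
  | S n', S k' => Phi k n' + Phi k' n'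
  end.

Lemma sauer_shelah C P k :
  NoDup P -> VCdim_le_on C P k -> length (traces C P) <= Phi k (length P).
Proof.
  revert C k; induction P as [|x P IH]; intros C k HP Hk.
  - destruct k; simpl; apply (Nat.le_trans _ _ _ (filter_length_le _ _)); auto.
  - apply NoDup_cons_iff in HP as [HxP HP].
    assert (HkP : VCdim_le_on C P k).
    { intros T HT HTP. apply Hk; auto. intros y Hy; right; auto. }
    assert (Hflip : forall T, NoDup T -> incl T P -> shatters (flippable_at C x P) T ->
                      S (length T) <= k).
    { intros T HT HTP Hsh. apply (Hk (x :: T)).
      - constructor; auto.
      - intros y [<-|Hy]; [left|right]; auto.
      - apply (flippable_at_shatters _ _ P); auto. }
    rewrite length_traces_cons. simpl length. destruct k as [|k].
    + destruct (traces (flippable_at C x P) P) as [|v vs] eqn:Ev.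
      * pose proof (IH C 0 HP HkP). destruct (length P); simpl in *; lia.
      * exfalso. assert (Hv : In v (traces (flippable_at C x P) P)) by (rewrite Ev; left; auto).
        apply In_traces in Hv as [h [Fh _]].
        specialize (Hflip [] (NoDup_nil _) (incl_nil_l _)). simpl in Hflip.
        enough (1 <= 0) by lia. apply Hflip. intros lab. exists h; split; [auto|intros _ []].
    + simpl. apply Nat.add_le_mono; [apply IH; auto|].
      apply IH; auto. intros T HT HTP Hsh. apply le_S_n, Hflip; auto.
Qed.

Lemma shatters_all_patterns C (S : list X) :
  NoDup S -> shatters C S -> forall v, length v = length S -> exists h, C h /\ map h S = v.
Proof.
  intros HS Hsh v Hv. destruct (labelling_exists S HS v Hv) as [lab <-].
  destruct (Hsh lab) as [h [Ch Hh]]. exists h; split; auto. apply map_ext_in; auto.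
Qed.

End Traces.

(* Bounding binomial n i by binomial n i * 10^(k-i) gives Phi k n <= 10^k (1 + 1/10)^n. *)
Lemma Phi_bound k n : Phi k n * 10 ^ n <= 10 ^ k * 11 ^ n.
Proof.
  revert k; induction n as [|n IH]; intros k.
  - simpl. pose proof (Nat.pow_le_mono_r 10 0 k). simpl in *. lia.
  - destruct k as [|k].
    + simpl. pose proof (Nat.pow_le_mono_l 10 11 n). lia.
    + simpl Phi. rewrite !Nat.pow_succ_r'.
      pose proof (IH (S k)). pose proof (IH k). rewrite Nat.pow_succ_r' in *. nia.
Qed.

Lemma pow_gap d m : 10 * d < m -> 100 ^ d * 121 ^ m < 200 ^ m.
Proof.
  intros Hm. destruct (Nat.le_exists_sub (10 * d + 1) m) as [j [-> _]]; [lia|].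
  apply Nat2Z.inj_lt. rewrite Nat2Z.inj_mul, !Nat2Z.inj_pow, !Nat2Z.inj_add, Nat2Z.inj_mul.
  set (D := Z.of_nat d); set (J := Z.of_nat j).
  assert (0 <= D)%Z by lia. assert (0 <= J)%Z by lia.
  rewrite !Z.pow_add_r, !Z.pow_mul_r by lia. simpl Z.of_nat.
  assert (Hd : (100 ^ D * (121 ^ 10) ^ D <= (200 ^ 10) ^ D)%Z).
  { rewrite <- Z.pow_mul_l. apply Z.pow_le_mono_l. split; [lia|]. apply Z.leb_le; reflexivity. }
  assert (Hj : (121 ^ J <= 200 ^ J)%Z) by (apply Z.pow_le_mono_l; lia).
  assert (0 < 121 ^ J)%Z by (apply Z.pow_pos_nonneg; lia).
  assert (0 < (121 ^ 10) ^ D)%Z by (apply Z.pow_pos_nonneg; lia).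
  assert (0 < 100 ^ D)%Z by (apply Z.pow_pos_nonneg; lia).
  nia.
Qed.

Fixpoint fpair_pattern (ys u w : list bool) : list bool :=
  match ys, u, w with
  | y :: ys', a :: u', b :: w' => (Bool.eqb a y || b) :: fpair_pattern ys' u' w'
  | _, _, _ => []
  end.

Lemma map_fpair {X} (h1 h2 : X -> bool) (S : list (X * bool)) :
  map (fpair h1 h2) S = fpair_pattern (map snd S) (map h1 (map fst S)) (map h2 (map fst S)).
Proof. induction S as [|[x y] S IH]; simpl; f_equal; auto. Qed.

Lemma Fclass_shatters_NoDup_fst {X} (H : (X -> bool) -> Prop) (S : list (X * bool)) :
  NoDup S -> shatters (Fclass H) S -> NoDup (map fst S).
Proof.
  intros HS Hsh. destruct (Hsh (fun _ => false)) as [f [[h1 [h2 [_ [_ ->]]]] Hf]].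
  apply (NoDup_map_inv (fun x => (x, negb (h1 x)))).
  replace (map _ (map fst S)) with S; auto.
  rewrite map_map, <- map_id at 1. apply map_ext_in. intros [x y] Hxy.
  specialize (Hf _ Hxy). unfold fpair in Hf; simpl in Hf.
  apply orb_false_iff in Hf as [Hf _]. simpl. destruct (h1 x), y; easy.
Qed.

Lemma Fclass_shatters_pow2_le {X} (H : (X -> bool) -> Prop) (S : list (X * bool)) :
  NoDup S -> shatters (Fclass H) S ->
  2 ^ length S <= length (traces H (map fst S)) * length (traces H (map fst S)).
Proof.
  intros HS Hsh.
  rewrite <- length_bool_vectors, <- length_prod.
  rewrite <- (length_map (fun uw => fpair_pattern (map snd S) (fst uw) (snd uw))).
  apply NoDup_incl_length; [apply NoDup_bool_vectors|]. intros v Hv.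
  apply In_bool_vectors in Hv.
  destruct (shatters_all_patterns _ _ HS Hsh v Hv) as [f [[h1 [h2 [Hh1 [Hh2 ->]]]] <-]].
  apply in_map_iff. exists (map h1 (map fst S), map h2 (map fst S)).
  split; [symmetry; apply map_fpair|].
  apply in_prod; apply In_traces; eauto.
Qed.

Theorem lemma6 (X : Type) (H : (X -> bool) -> Prop) (d : nat) :
  1 <= d -> VCdim_eq H d -> VCdim_le (Fclass H) (10 * d).
Proof.
  intros _ [_ HvcH] S HS Hsh. set (m := length S).
  set (t := length (traces H (map fst S))).
  assert (Hsauer : t <= Phi d m).
  { unfold t, m; rewrite <- (length_map fst S). apply sauer_shelah.
    - apply (Fclass_shatters_NoDup_fst H); auto.
    - intros T HT _ HTs. apply HvcH; auto. }
  assert (Ht : t * 10 ^ m <= 10 ^ d * 11 ^ m).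
  { apply (Nat.le_trans _ (Phi d m * 10 ^ m)); [apply Nat.mul_le_mono_r, Hsauer | apply Phi_bound]. }
  assert (Hsq : 2 ^ m * (10 ^ m * 10 ^ m) <= (10 ^ d * 11 ^ m) * (10 ^ d * 11 ^ m)).
  { apply (Nat.le_trans _ ((t * 10 ^ m) * (t * 10 ^ m))); [|apply Nat.mul_le_mono; exact Ht].
    rewrite Nat.mul_shuffle1. apply Nat.mul_le_mono_r, Fclass_shatters_pow2_le; auto. }
  rewrite Nat.mul_shuffle1, <- !Nat.pow_mul_l in Hsq.
  destruct (Nat.le_gt_cases m (10 * d)) as [|Hm]; [auto|exfalso].
  apply (Nat.lt_irrefl (200 ^ m)), (Nat.le_lt_trans _ _ _ Hsq), pow_gap, Hm.
Qed.
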